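(* Let $(\mathcal{S},\mathcal{R})$ be a positive presentation. Then $(\mathcal{S},\mathcal{R})$ is $r$-complete if and only if any one of the following four conditions holds, and these four conditions are equivalent: (i) for all $u,v\in\mathcal{S}^*$, $u\equiv v$ holds if and only if $u^{-1}v\curvearrowright_r\varepsilon$; (ii) the binary relation on $\mathcal{S}^*$ defined by ''$u^{-1}v\curvearrowright_r\varepsilon$'' is transitive; (iii) the strong $r$-cube condition holds at $u,v,w$ for all $u,v,w\in\mathcal{S}^*$; (iv) the $r$-cube condition holds at $u,v,w$ for all $u,v,w\in\mathcal{S}^*$.
   Context: A positive presentation is a pair $(\mathcal{S},\mathcal{R})$ where $\mathcal{S}$ is a nonempty set of letters and $\mathcal{R}$ is a family of relations $u=v$, i.e. unordered pairs $\{u,v\}$ of nonempty words in the free monoid $\mathcal{S}^*$. $\varepsilon$ denotes the empty word; $\equiv$ is the smallest congruence on $\mathcal{S}^*$ containing all pairs of $\mathcal{R}$. Let $\mathcal{S}^{-1}=\{s^{-1}:s\in\mathcal{S}\}$ be a disjoint copy of $\mathcal{S}$; for $u\in\mathcal{S}^*$, $u^{-1}$ is obtained by reversing the order of the letters of $u$ and replacing each $s$ by $s^{-1}$. Right reversing: for words $\mathbf{w},\mathbf{w}'$ on $\mathcal{S}\cup\mathcal{S}^{-1}$ we write $\mathbf{w}\curvearrowright_r\mathbf{w}'$ if $\mathbf{w}'$ is obtained from $\mathbf{w}$ by a finite (possibly empty) sequence of steps, each of which either deletes a subword $u^{-1}u$ with $u\in\mathcal{S}^*$ nonempty, or replaces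 a subword $u^{-1}v$ with $u,v\in\mathcal{S}^*$ nonempty by a word $v'u'^{-1}$ with $u',v'\in\mathcal{S}^*$ such that $uv'=vu'$ is a relation of $\mathcal{R}$. $(\mathcal{S},\mathcal{R})$ is $r$-complete if for all $u,v,u',v'\in\mathcal{S}^*$ with $uv'\equiv vu'$ there exist $u'',v'',w\in\mathcal{S}^*$ with $u^{-1}v\curvearrowright_r v''u''^{-1}$, $u'\equiv u''w$ and $v'\equiv v''w$. For $u,v,w\in\mathcal{S}^*$: the $r$-cube condition holds at $u,v,w$ if whenever $u^{-1}ww^{-1}v\curvearrowright_r v'u'^{-1}$ with $u',v'\in\mathcal{S}^*$, there exist $u'',v'',w''\in\mathcal{S}^*$ with $u^{-1}v\curvearrowright_r v''u''^{-1}$, $u'\equiv u''w''$ and $v'\equiv v''w''$; the strong $r$-cube condition holds at $u,v,w$ if whenever $u^{-1}ww^{-1}v\curvearrowright_r v'u'^{-1}$ with $u',v'\in\mathcal{S}^*$, we have $(uv')^{-1}(vu')\curvearrowright_r\varepsilon$. *)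

From Stdlib Require Import List.
Import ListNotations.
Set Implicit Arguments.

Section Presentation.
Variable S : Type.

(* Words on S ∪ S^{-1}: [inl s] is the letter s, [inr s] is s^{-1}. *)
Definition sword := list (S + S).

Definition pos (u : list S) : sword := map (@inl S S) u.

Definition inv (u : list S) : sword := rev (map (@inr S S) u).

(* A family of relations is given by a predicate R; the relation u = v
   is the unordered pair {u,v}, so "uv' = vu' is a relation of R" means
   R (u v') (v u') or R (v u') (u v'). *)
Definition is_relation (R : list S -> list S -> Prop) (x y : list S) : Prop :=
  R x y \/ R y x.

Definition positive_relations (R : list S -> list S -> Prop) : Prop :=
  forall x y, R x y -> x <> [] /\ y <> [].

Definition is_congruence (E : list S -> list S -> Prop) : Prop :=
  (forall x, E x x) /\ (forall x y, E x y -> E y x) /\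
  (forall x y z, E x y -> E y z -> E x z) /\
  (forall x y a b, E x y -> E (a ++ x ++ b) (a ++ y ++ b)).

Definition equiv (R : list S -> list S -> Prop) (u v : list S) : Prop :=
  forall E, is_congruence E -> (forall x y, R x y -> E x y) -> E u v.

Inductive rev_step (R : list S -> list S -> Prop) : sword -> sword -> Prop :=
| rev_del : forall (a b : sword) (u : list S), u <> [] ->
    rev_step R (a ++ inv u ++ pos u ++ b) (a ++ b)
| rev_rel : forall (a b : sword) (u v u' v' : list S), u <> [] -> v <> [] ->
    is_relation R (u ++ v') (v ++ u') ->
    rev_step R (a ++ inv u ++ pos v ++ b) (a ++ pos v' ++ inv u' ++ b).

Inductive reverses (R : list S -> list S -> Prop) : sword -> sword -> Prop :=
| reverses_refl : forall w, reverses R w w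
| reverses_step : forall w w' w'', rev_step R w w' -> reverses R w' w'' ->
    reverses R w w''.

Definition r_complete (R : list S -> list S -> Prop) : Prop :=
  forall u v u' v' : list S, equiv R (u ++ v') (v ++ u') ->
    exists u'' v'' w : list S,
      reverses R (inv u ++ pos v) (pos v'' ++ inv u'') /\
      equiv R u' (u'' ++ w) /\ equiv R v' (v'' ++ w).

Definition r_cube (R : list S -> list S -> Prop) (u v w : list S) : Prop :=
  forall u' v' : list S,
    reverses R (inv u ++ pos w ++ inv w ++ pos v) (pos v' ++ inv u') ->
    exists u'' v'' w'' : list S,
      reverses R (inv u ++ pos v) (pos v'' ++ inv u'') /\
      equiv R u' (u'' ++ w'') /\ equiv R v' (v'' ++ w'').

Definition strong_r_cube (R : list S -> list S -> Prop) (u v w : list S) : Prop :=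
  forall u' v' : list S,
    reverses R (inv u ++ pos w ++ inv w ++ pos v) (pos v' ++ inv u') ->
    reverses R (inv (u ++ v') ++ pos (v ++ u')) [].

End Presentation.

(* Reversing is sound: reading a signed word as a walk in the monoid [S^*/≡], where
   [s^-1] steps from [z s] back to [z], every reversing step preserves walks.  The
   converse directions rest on one structural fact: a reversing of a product [w1 w2]
   to [p q^-1] can be cut into reversings of [w1] and of [w2] followed by a reversing
   of the middle [q1^-1 p2] where they meet.  It is proved by induction on the number
   of relation steps, the critical case being a relation step across the cut.  With
   it, (i) yields r-completeness.  Under (ii), "u^-1 v ↷ ε" is a congruence containing
   [R], hence contains [≡], which gives (i).  Finally, the (strong) cube condition at
   [u, w, v] with [u' = v' = ε] is transitivity, and soundness gives the converse
   implications. *)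

From Stdlib Require Import List Lia Wf_nat.
Import ListNotations.

Section Reversing.

Context {A : Type} {R : list A -> list A -> Prop}.

Lemma pos_nil : pos (@nil A) = [].
Proof. reflexivity. Qed.

Lemma inv_nil : inv (@nil A) = [].
Proof. reflexivity. Qed.

Lemma pos_app (x y : list A) : pos (x ++ y) = pos x ++ pos y.
Proof. unfold pos; apply map_app. Qed.

Lemma inv_app (x y : list A) : inv (x ++ y) = inv y ++ inv x.
Proof. unfold inv; rewrite map_app, rev_app_distr; reflexivity. Qed.

Lemma pos_eq_app (v : list A) x y : pos v = x ++ y ->
  exists v1 v2, v = v1 ++ v2 /\ x = pos v1 /\ y = pos v2.
Proof.
  unfold pos; intro H; apply map_eq_app in H as (v1 & v2 & E & E1 & E2).
  exists v1, v2; auto.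
Qed.

Lemma inv_eq_app (u : list A) x y : inv u = x ++ y ->
  exists u1 u2, u = u1 ++ u2 /\ x = inv u2 /\ y = inv u1.
Proof.
  unfold inv; intro H.
  assert (H' : map inr u = rev y ++ rev x)
    by (rewrite <- rev_app_distr, <- H, rev_involutive; reflexivity).
  apply map_eq_app in H' as (u1 & u2 & E & E1 & E2).
  exists u1, u2; rewrite E2, E1, !rev_involutive; auto.
Qed.

Ltac simpl_words :=
  rewrite ?pos_app, ?inv_app, ?pos_nil, ?inv_nil;
  repeat rewrite <- app_assoc; cbn [app]; repeat rewrite <- app_assoc;
  rewrite ?app_nil_r; try reflexivity.

Lemma equiv_refl x : equiv R x x.
Proof. intros E (E_refl & _) _; apply E_refl. Qed.

Lemma equiv_sym {x y} : equiv R x y -> equiv R y x.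
Proof. intros H E HE HR; pose proof HE as (_ & E_sym & _); apply E_sym, H; assumption. Qed.

Lemma equiv_trans {x y z} : equiv R x y -> equiv R y z -> equiv R x z.
Proof.
  intros H H' E HE HR; pose proof HE as (_ & _ & E_trans & _).
  apply E_trans with y; [apply H | apply H']; assumption.
Qed.

Lemma equiv_ctx {x y} a b : equiv R x y -> equiv R (a ++ x ++ b) (a ++ y ++ b).
Proof. intros H E HE HR; pose proof HE as (_ & _ & _ & E_ctx); apply E_ctx, H; assumption. Qed.

Lemma equiv_app_l {x y} z : equiv R x y -> equiv R (z ++ x) (z ++ y).
Proof. intro H; pose proof (equiv_ctx z [] H) as K; rewrite !app_nil_r in K; exact K. Qed.

Lemma equiv_app_r {x y} z : equiv R x y -> equiv R (x ++ z) (y ++ z).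
Proof. exact (equiv_ctx [] z). Qed.

Lemma equiv_relation x y : is_relation R x y -> equiv R x y.
Proof. intros [H | H]; [| apply equiv_sym]; intros E _ HR; apply HR, H. Qed.

(* By positivity, [a = [] <-> b = []] is a congruence containing [R]. *)
Lemma equiv_nil_l {x} : positive_relations R -> equiv R [] x -> x = [].
Proof.
  intros HR H.
  apply (H (fun a b => a = [] <-> b = [])); [| | reflexivity].
  - repeat split; try tauto; intro Hnil;
      apply app_eq_nil in Hnil as [-> Hnil]; apply app_eq_nil in Hnil as [Hnil ->];
      rewrite app_nil_r; cbn [app]; tauto.
  - intros y z Hyz; destruct (HR _ _ Hyz); tauto.
Qed.

(* [walk w x y]: reading [w] from [x] leads to [y] in [A^*/≡], where a letter
   [s^-1] can only be read at a word [≡ z s] and leads to [z]. *)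
Fixpoint walk (w : sword A) (x y : list A) : Prop :=
  match w with
  | [] => equiv R x y
  | inl s :: w' => walk w' (x ++ [s]) y
  | inr s :: w' => exists z, equiv R x (z ++ [s]) /\ walk w' z y
  end.

Lemma walk_equiv_l {w x x' y} : equiv R x x' -> walk w x y -> walk w x' y.
Proof.
  revert x x' y; induction w as [| [s | s] w IH]; intros x x' y E H; cbn [walk] in *.
  - exact (equiv_trans (equiv_sym E) H).
  - exact (IH _ _ _ (equiv_app_r [s] E) H).
  - destruct H as [z [Hz Hw]]; exists z; split; [exact (equiv_trans (equiv_sym E) Hz) | exact Hw].
Qed.

Lemma walk_app w1 : forall w2 x y, walk (w1 ++ w2) x y <-> exists m, walk w1 x m /\ walk w2 m y.
Proof.
  induction w1 as [| [s | s] w IH]; intros w2 x y; cbn [app walk].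
  - split.
    + intro H; exists x; split; [apply equiv_refl | exact H].
    + intros [m [Hm Hw]]; exact (walk_equiv_l (equiv_sym Hm) Hw).
  - apply IH.
  - split.
    + intros [z [Hz Hw]]; apply IH in Hw as [m [H1 H2]]; eauto.
    + intros [m [[z [Hz H1]] H2]]; exists z; split; [| apply IH]; eauto.
Qed.

Lemma walk_pos u : forall x y, walk (pos u) x y <-> equiv R (x ++ u) y.
Proof.
  induction u as [| s u IH]; intros x y.
  - rewrite app_nil_r; reflexivity.
  - change (pos (s :: u)) with (inl s :: pos u); cbn [walk].
    rewrite IH, <- app_assoc; reflexivity.
Qed.

Lemma walk_inv u : forall x y, walk (inv u) x y <-> equiv R x (y ++ u).
Proof.
  induction u as [| s u IH]; intros x y.
  - rewrite app_nil_r; reflexivity.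
  - change (inv (s :: u)) with (inv u ++ [inr s]); rewrite walk_app; split.
    + intros [m [H1 [z [Hz Hzy]]]]; apply IH in H1.
      apply (equiv_trans H1).
      replace (y ++ s :: u) with ((y ++ [s]) ++ u) by (rewrite <- app_assoc; reflexivity).
      apply (equiv_app_r u), (equiv_trans Hz), (equiv_app_r [s]), Hzy.
    + intro H; exists (y ++ [s]); split.
      * apply IH; rewrite <- app_assoc; exact H.
      * exists y; split; apply equiv_refl.
Qed.

Lemma walk_rev_step {w w' x y} : rev_step R w w' -> walk w x y -> walk w' x y.
Proof.
  intros [a b u Hu | a b u v u' v' Hu Hv Hr] Hw;
    apply walk_app in Hw as [m1 [Ha Hw]]; apply walk_app in Hw as [m2 [Hu' Hw]];
    apply walk_app in Hw as [m3 [Hv' Hb]]; apply walk_inv in Hu'; apply walk_pos in Hv';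
    apply walk_app; exists m1; split; try exact Ha.
  - exact (walk_equiv_l (equiv_trans (equiv_sym Hv') (equiv_sym Hu')) Hb).
  - apply walk_app; exists (m1 ++ v'); split; [apply walk_pos, equiv_refl |].
    apply walk_app; exists m3; split; [apply walk_inv | exact Hb].
    apply (equiv_trans (equiv_app_r v' Hu')).
    apply equiv_sym, (equiv_trans (equiv_app_r u' (equiv_sym Hv'))).
    rewrite <- !app_assoc; apply (equiv_app_l m2), equiv_relation.
    destruct Hr; [right | left]; assumption.
Qed.

Lemma walk_reverses {w w' x y} : reverses R w w' -> walk w x y -> walk w' x y.
Proof. induction 1; eauto using walk_rev_step. Qed.

Lemma reverses_sound_walk {w p q x y} :
  reverses R w (pos p ++ inv q) -> walk w x y -> equiv R (x ++ p) (y ++ q).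
Proof.
  intros H Hw; apply (walk_reverses H), walk_app in Hw as [m [H1 H2]].
  apply walk_pos in H1; apply walk_inv in H2; exact (equiv_trans H1 H2).
Qed.

Lemma reverses_cube_sound u v w u' v' :
  reverses R (inv u ++ pos w ++ inv w ++ pos v) (pos v' ++ inv u') ->
  equiv R (u ++ v') (v ++ u').
Proof.
  intro H; apply (reverses_sound_walk H).
  apply walk_app; exists []; split; [apply walk_inv, equiv_refl |].
  apply walk_app; exists w; split; [apply walk_pos, equiv_refl |].
  apply walk_app; exists []; split; [apply walk_inv, equiv_refl | apply walk_pos, equiv_refl].
Qed.

Lemma reverses_sound u v u' v' :
  reverses R (inv u ++ pos v) (pos v' ++ inv u') -> equiv R (u ++ v') (v ++ u').
Proof. exact (reverses_cube_sound u v [] u' v'). Qed.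

(* [nreverses n w w'] is [w ↷_r w'] with exactly [n] relation steps; deletions are
   free, so cutting a reversing into pieces never increases the count. *)
Inductive nreverses : nat -> sword A -> sword A -> Prop :=
| nreverses_refl w : nreverses 0 w w
| nreverses_del n a b u w : u <> [] -> nreverses n (a ++ b) w ->
    nreverses n (a ++ inv u ++ pos u ++ b) w
| nreverses_rel n a b u v u' v' w : u <> [] -> v <> [] ->
    is_relation R (u ++ v') (v ++ u') -> nreverses n (a ++ pos v' ++ inv u' ++ b) w ->
    nreverses (S n) (a ++ inv u ++ pos v ++ b) w.

Lemma reverses_nreverses w w' : reverses R w w' <-> exists n, nreverses n w w'.
Proof.
  split.
  - induction 1 as [w | w w1 w'' Hs H [n IH]]; [exists 0; constructor |].
    destruct Hs; [exists n | exists (S n)]; econstructor; eassumption.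
  - intros [n H]; induction H; econstructor; try eassumption; constructor; assumption.
Qed.

Lemma nreverses_eq {n w w' W W'} : nreverses n w w' -> W = w -> W' = w' -> nreverses n W W'.
Proof. intros H -> ->; exact H. Qed.

Lemma nreverses_trans {n m w1 w2 w3} :
  nreverses n w1 w2 -> nreverses m w2 w3 -> nreverses (n + m) w1 w3.
Proof. induction 1; intro H'; cbn [plus]; try econstructor; eauto. Qed.

Lemma nreverses_ctx {n w w'} c d : nreverses n w w' -> nreverses n (c ++ w ++ d) (c ++ w' ++ d).
Proof.
  induction 1 as [w | n a b u w Hu H IH | n a b u v u' v' w Hu Hv Hr H IH].
  - constructor.
  - replace (c ++ (a ++ inv u ++ pos u ++ b) ++ d) with ((c ++ a) ++ inv u ++ pos u ++ b ++ d)
      by simpl_words.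
    apply nreverses_del; [exact Hu |]; apply (nreverses_eq IH); simpl_words.
  - replace (c ++ (a ++ inv u ++ pos v ++ b) ++ d) with ((c ++ a) ++ inv u ++ pos v ++ b ++ d)
      by simpl_words.
    apply (nreverses_rel _ _ _ _ _ _ _ _ Hu Hv Hr); apply (nreverses_eq IH); simpl_words.
Qed.

Lemma nreverses_del_step a b u : u <> [] -> nreverses 0 (a ++ inv u ++ pos u ++ b) (a ++ b).
Proof. intro Hu; apply nreverses_del; [exact Hu | constructor]. Qed.

Lemma nreverses_rel_step a b u v u' v' : u <> [] -> v <> [] ->
  is_relation R (u ++ v') (v ++ u') ->
  nreverses 1 (a ++ inv u ++ pos v ++ b) (a ++ pos v' ++ inv u' ++ b).
Proof.
  intros Hu Hv Hr; apply nreverses_rel with u' v'; [exact Hu | exact Hv | exact Hr |].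
  constructor.
Qed.

Ltac nreverses_from H := apply (nreverses_eq H); simpl_words.

Lemma nreverses_inv_pos u : nreverses 0 (inv u ++ pos u) [].
Proof.
  destruct u as [| s u]; [constructor |].
  nreverses_from (nreverses_del_step [] [] (s :: u) ltac:(discriminate)).
Qed.

Lemma reverses_trans {w1 w2 w3} : reverses R w1 w2 -> reverses R w2 w3 -> reverses R w1 w3.
Proof.
  rewrite !reverses_nreverses; intros [n H] [m H']; exists (n + m);
    exact (nreverses_trans H H').
Qed.

Lemma reverses_ctx {w w'} c d : reverses R w w' -> reverses R (c ++ w ++ d) (c ++ w' ++ d).
Proof. rewrite !reverses_nreverses; intros [n H]; exists n; exact (nreverses_ctx c d H). Qed.

Definition word_inv (w : sword A) : sword A :=
  rev (map (fun l => match l with inl s => inr s | inr s => inl s end) w).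

Lemma word_inv_app x y : word_inv (x ++ y) = word_inv y ++ word_inv x.
Proof. unfold word_inv; rewrite map_app, rev_app_distr; reflexivity. Qed.

Lemma word_inv_pos u : word_inv (pos u) = inv u.
Proof. unfold word_inv, pos, inv; rewrite map_map; reflexivity. Qed.

Lemma word_inv_inv u : word_inv (inv u) = pos u.
Proof. unfold word_inv, pos, inv; rewrite map_rev, rev_involutive, map_map; reflexivity. Qed.

Lemma rev_step_word_inv {w w'} : rev_step R w w' -> rev_step R (word_inv w) (word_inv w').
Proof.
  intros [a b u Hu | a b u v u' v' Hu Hv Hr];
    rewrite !word_inv_app, ?word_inv_inv, ?word_inv_pos, <- !app_assoc.
  - apply rev_del, Hu.
  - apply rev_rel; [exact Hv | exact Hu | destruct Hr; [right | left]; assumption].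
Qed.

Lemma reverses_word_inv {w w'} : reverses R w w' -> reverses R (word_inv w) (word_inv w').
Proof. induction 1; econstructor; eauto using rev_step_word_inv. Qed.

Definition reversing_equiv (u v : list A) : Prop := reverses R (inv u ++ pos v) [].

Definition reversing_transitive : Prop :=
  forall u v w, reversing_equiv u v -> reversing_equiv v w -> reversing_equiv u w.

Definition equiv_iff_reversing : Prop := forall u v, equiv R u v <-> reversing_equiv u v.

Lemma reversing_equiv_refl u : reversing_equiv u u.
Proof. apply reverses_nreverses; exists 0; apply nreverses_inv_pos. Qed.

Lemma reversing_equiv_sym {u v} : reversing_equiv u v -> reversing_equiv v u.
Proof.
  intro H; apply reverses_word_inv in H.
  rewrite word_inv_app, word_inv_inv, word_inv_pos in H; exact H.
Qed.

Lemma reversing_equiv_ctx {x y} a b :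
  reversing_equiv x y -> reversing_equiv (a ++ x ++ b) (a ++ y ++ b).
Proof.
  intro H; unfold reversing_equiv.
  replace (inv (a ++ x ++ b) ++ pos (a ++ y ++ b))
    with ((inv b ++ inv x) ++ (inv a ++ pos a) ++ (pos y ++ pos b)) by simpl_words.
  apply (reverses_trans (reverses_ctx _ _ (reversing_equiv_refl a))).
  replace ((inv b ++ inv x) ++ [] ++ pos y ++ pos b) with (inv b ++ (inv x ++ pos y) ++ pos b)
    by simpl_words.
  apply (reverses_trans (reverses_ctx _ _ H)), reversing_equiv_refl.
Qed.

Lemma reversing_equiv_sound {u v} : reversing_equiv u v -> equiv R u v.
Proof. intro H; pose proof (reverses_sound u v [] [] H) as K; rewrite !app_nil_r in K; exact K. Qed.

Lemma reversing_equiv_rel x y : positive_relations R -> R x y -> reversing_equiv x y.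
Proof.
  intros HR H; destruct (HR _ _ H) as [Hx Hy].
  apply reverses_nreverses; exists 1.
  assert (Hr : is_relation R (x ++ []) (y ++ [])) by (rewrite !app_nil_r; left; exact H).
  nreverses_from (nreverses_rel_step [] [] x y [] [] Hx Hy Hr).
Qed.

Definition splits (n : nat) (w1 w2 : sword A) (p q : list A) : Prop :=
  exists p1 q1 p2 q2 p3 q3 n1 n2 n3,
    nreverses n1 w1 (pos p1 ++ inv q1) /\ nreverses n2 w2 (pos p2 ++ inv q2) /\
    nreverses n3 (inv q1 ++ pos p2) (pos p3 ++ inv q3) /\
    p = p1 ++ p3 /\ q = q2 ++ q3 /\ n1 + n2 + n3 <= n.

Definition splitting (n : nat) : Prop :=
  forall w1 w2 p q, nreverses n (w1 ++ w2) (pos p ++ inv q) -> splits n w1 w2 p q.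

Lemma splits_le {m n w1 w2 p q} : m <= n -> splits m w1 w2 p q -> splits n w1 w2 p q.
Proof.
  intros Hmn (p1 & q1 & p2 & q2 & p3 & q3 & n1 & n2 & n3 & H1 & H2 & H3 & Hp & Hq & Hn).
  exists p1, q1, p2, q2, p3, q3, n1, n2, n3; repeat split; auto; lia.
Qed.

Lemma splits_nf {w1 w2 p q} : w1 ++ w2 = pos p ++ inv q -> splits 0 w1 w2 p q.
Proof.
  intro Hw; apply app_eq_app in Hw as [l [[-> Hl] | [Hp ->]]].
  - apply inv_eq_app in Hl as (q1 & q2 & -> & -> & ->).
    exists p, q2, [], q1, [], q2, 0, 0, 0; repeat split; simpl_words; constructor.
  - apply pos_eq_app in Hp as (p1 & p2 & -> & -> & ->).
    exists p1, [], p2, q, p2, [], 0, 0, 0; repeat split; simpl_words; constructor.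
Qed.

(* The halves may first be reversed up to a cut between [k^-1] and [k] ([k] possibly
   empty); they then meet through [k^-1 k ↷ ε]. *)
Lemma splits_glue {x y N w1 w2 a b k p q} :
  nreverses x w1 (a ++ inv k) -> nreverses y w2 (pos k ++ b) ->
  splits N a b p q -> splits (x + y + N) w1 w2 p q.
Proof.
  intros Hx Hy (p1 & q1 & p2 & q2 & p3 & q3 & n1 & n2 & n3 & H1 & H2 & H3 & -> & -> & Hn).
  exists p1, (k ++ q1), (k ++ p2), q2, p3, q3, (x + n1), (y + n2), n3.
  split; [| split; [| split]].
  - apply (nreverses_trans Hx); nreverses_from (nreverses_ctx [] (inv k) H1).
  - apply (nreverses_trans Hy); nreverses_from (nreverses_ctx (pos k) [] H2).
  - apply (nreverses_trans (n := 0) (w2 := inv q1 ++ pos p2)); [| exact H3].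
    nreverses_from (nreverses_ctx (inv q1) (pos p2) (nreverses_inv_pos k)).
  - repeat split; lia.
Qed.

Lemma app_eq_redex {w1 w2 a b : sword A} {u v : list A} :
  w1 ++ w2 = a ++ inv u ++ pos v ++ b -> u <> [] -> v <> [] ->
  (exists c, w1 = a ++ inv u ++ pos v ++ c /\ b = c ++ w2) \/
  (exists c, a = w1 ++ c /\ w2 = c ++ inv u ++ pos v ++ b) \/
  (w1 = a ++ inv u /\ w2 = pos v ++ b) \/
  (exists u1 u2, u1 <> [] /\ u2 <> [] /\ u = u1 ++ u2 /\
     w1 = a ++ inv u2 /\ w2 = inv u1 ++ pos v ++ b) \/
  (exists v1 v2, v1 <> [] /\ v2 <> [] /\ v = v1 ++ v2 /\
     w1 = a ++ inv u ++ pos v1 /\ w2 = pos v2 ++ b).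
Proof.
  intros H Hu Hv; apply app_eq_app in H as [l [[-> H] | [-> H]]];
    [| right; left; exists l; auto].
  apply app_eq_app in H as [l' [[H H'] | [-> H]]].
  - destruct l' as [| z l']; [rewrite app_nil_r in H; subst; auto |].
    destruct l as [| y l].
    + right; left; exists []; split; [simpl_words |]; rewrite H'; simpl_words.
      rewrite H; reflexivity.
    + apply inv_eq_app in H as (u1 & u2 & Eu & E1 & E2); do 3 right; left.
      exists u1, u2; rewrite <- E1, <- E2, H'; repeat split; auto;
        intros ->; discriminate.
  - apply app_eq_app in H as [l'' [[H ->] | [-> ->]]]; [| left; exists l''; split; simpl_words].
    apply pos_eq_app in H as (v1 & v2 & -> & -> & ->).
    destruct v2 as [| z v2]; [left; exists []; split; simpl_words |].
    destruct v1 as [| y v1]; [right; right; left; split; simpl_words |].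
    do 4 right; exists (y :: v1), (z :: v2); repeat split; try discriminate; simpl_words.
Qed.

Lemma splits_del {n a b u w1 w2 p q} : u <> [] -> w1 ++ w2 = a ++ inv u ++ pos u ++ b ->
  (forall w1 w2, a ++ b = w1 ++ w2 -> splits n w1 w2 p q) -> splits n w1 w2 p q.
Proof.
  intros Hu Hw IH; apply (splits_le (m := 0 + 0 + n)); [lia |].
  destruct (app_eq_redex Hw Hu Hu) as [(c & -> & ->) | [(c & -> & ->) | [(-> & ->) |
    [(u1 & u2 & N1 & N2 & -> & -> & ->) | (v1 & v2 & N1 & N2 & Eu & -> & ->)]]]].
  - apply (splits_glue (a := a ++ c) (k := []) (b := w2)).
    + nreverses_from (nreverses_del_step a c u Hu).
    + nreverses_from (nreverses_refl w2).
    + apply IH; simpl_words.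
  - apply (splits_glue (a := w1) (k := []) (b := c ++ b)).
    + nreverses_from (nreverses_refl w1).
    + nreverses_from (nreverses_del_step c b u Hu).
    + apply IH; simpl_words.
  - apply (splits_glue (a := a) (k := u) (b := b)); try constructor; apply IH; reflexivity.
  - apply (splits_glue (a := a) (k := u2) (b := b)); [constructor | | apply IH; reflexivity].
    nreverses_from (nreverses_del_step [] (pos u2 ++ b) u1 N1).
  - apply (splits_glue (a := a) (k := v2) (b := b)); [| constructor | apply IH; reflexivity].
    subst u; nreverses_from (nreverses_del_step (a ++ inv v2) [] v1 N1).
Qed.

(* The only case that needs the induction on the number of relation steps: the
   reversed continuation must itself be cut a second time. *)
Lemma splits_rel_boundary {n a b u v u' v' p q} : u <> [] -> v <> [] ->
  is_relation R (u ++ v') (v ++ u') -> (forall m, m <= n -> splitting m) ->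
  splits n a (pos v' ++ inv u' ++ b) p q -> splits (S n) (a ++ inv u) (pos v ++ b) p q.
Proof.
  intros Hu Hv Hr Hsplit
    (p1 & q1 & p2 & q2 & p3 & q3 & r1 & r2 & r3 & H1 & H2 & H3 & -> & -> & Hn).
  assert (H2' : nreverses r2 ((pos v' ++ inv u') ++ b) (pos p2 ++ inv q2))
    by (rewrite <- app_assoc; exact H2).
  destruct (Hsplit r2 ltac:(lia) _ _ _ _ H2')
    as (x & y & p2' & q2' & z & t & s1 & s2 & s3 & G1 & G2 & G3 & -> & -> & Hs).
  exists p1, (u ++ q1), (v ++ p2'), q2', p3, (t ++ q3), r1, s2, (1 + s1 + s3 + r3).
  split; [| split; [| split]].
  - nreverses_from (nreverses_ctx [] (inv u) H1).
  - nreverses_from (nreverses_ctx (pos v) [] G2).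
  - apply (nreverses_trans (w2 := inv q1 ++ pos x ++ pos z ++ inv t));
      [| nreverses_from (nreverses_ctx [] (inv t) H3)].
    apply (nreverses_trans (w2 := inv q1 ++ pos x ++ inv y ++ pos p2'));
      [| nreverses_from (nreverses_ctx (inv q1 ++ pos x) [] G3)].
    apply (nreverses_trans (w2 := inv q1 ++ pos v' ++ inv u' ++ pos p2'));
      [| nreverses_from (nreverses_ctx (inv q1) (pos p2') G1)].
    nreverses_from (nreverses_rel_step (inv q1) (pos p2') u v u' v' Hu Hv Hr).
  - repeat split; [simpl_words | lia].
Qed.

Lemma splits_rel {n a b u v u' v' w1 w2 p q} : u <> [] -> v <> [] ->
  is_relation R (u ++ v') (v ++ u') -> (forall m, m <= n -> splitting m) ->
  w1 ++ w2 = a ++ inv u ++ pos v ++ b ->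
  (forall w1 w2, a ++ pos v' ++ inv u' ++ b = w1 ++ w2 -> splits n w1 w2 p q) ->
  splits (S n) w1 w2 p q.
Proof.
  intros Hu Hv Hr Hsplit Hw IH.
  destruct (app_eq_redex Hw Hu Hv) as [(c & -> & ->) | [(c & -> & ->) | [(-> & ->) |
    [(u1 & u2 & N1 & N2 & -> & -> & ->) | (v1 & v2 & N1 & N2 & -> & -> & ->)]]]].
  - apply (splits_le (m := 1 + 0 + n)); [lia |].
    apply (splits_glue (a := a ++ pos v' ++ inv u' ++ c) (k := []) (b := w2)).
    + nreverses_from (nreverses_rel_step a c u v u' v' Hu Hv Hr).
    + nreverses_from (nreverses_refl w2).
    + apply IH; simpl_words.
  - apply (splits_le (m := 0 + 1 + n)); [lia |].
    apply (splits_glue (a := w1) (k := []) (b := c ++ pos v' ++ inv u' ++ b)).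
    + nreverses_from (nreverses_refl w1).
    + nreverses_from (nreverses_rel_step c b u v u' v' Hu Hv Hr).
    + apply IH; simpl_words.
  - exact (splits_rel_boundary Hu Hv Hr Hsplit (IH _ _ eq_refl)).
  - apply (splits_le (m := 0 + 1 + n)); [lia |].
    apply (splits_glue (a := a) (k := u2) (b := pos v' ++ inv u' ++ b));
      [constructor | | apply IH; reflexivity].
    rewrite <- app_assoc in Hr.
    nreverses_from (nreverses_rel_step [] b u1 v u' (u2 ++ v') N1 Hv Hr).
  - apply (splits_le (m := 1 + 0 + n)); [lia |].
    apply (splits_glue (a := a ++ pos v' ++ inv u') (k := v2) (b := b));
      [| constructor | apply IH; simpl_words].
    rewrite <- app_assoc in Hr.
    nreverses_from (nreverses_rel_step a [] u v1 (v2 ++ u') v' Hu N1 Hr).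
Qed.

Lemma nreverses_splits_ind {n w t} : nreverses n w t -> (forall m, m < n -> splitting m) ->
  forall w1 w2 p q, w = w1 ++ w2 -> t = pos p ++ inv q -> splits n w1 w2 p q.
Proof.
  induction 1 as [w | n a b u w Hu H IH | n a b u v u' v' w Hu Hv Hr H IH];
    intros Hsplit w1 w2 p q Hw Ht.
  - subst; exact (splits_nf Ht).
  - apply (splits_del Hu (eq_sym Hw)); intros w1' w2' Hw'; exact (IH Hsplit _ _ _ _ Hw' Ht).
  - apply (splits_rel Hu Hv Hr (a := a) (b := b));
      [intros m Hm; apply Hsplit; lia | exact (eq_sym Hw) |].
    intros w1' w2' Hw'; apply IH; [intros m Hm; apply Hsplit; lia | exact Hw' | exact Ht].
Qed.

Lemma nreverses_splits n : splitting n.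
Proof.
  induction n as [n IHn] using (well_founded_induction lt_wf).
  intros w1 w2 p q H; exact (nreverses_splits_ind H IHn _ _ _ _ eq_refl eq_refl).
Qed.

Lemma reverses_split w1 w2 p q : reverses R (w1 ++ w2) (pos p ++ inv q) ->
  exists p1 q1 p2 q2 p3 q3,
    reverses R w1 (pos p1 ++ inv q1) /\ reverses R w2 (pos p2 ++ inv q2) /\
    reverses R (inv q1 ++ pos p2) (pos p3 ++ inv q3) /\ p = p1 ++ p3 /\ q = q2 ++ q3.
Proof.
  intros H; apply reverses_nreverses in H as [n H].
  destruct (nreverses_splits n _ _ _ _ H)
    as (p1 & q1 & p2 & q2 & p3 & q3 & n1 & n2 & n3 & H1 & H2 & H3 & Hp & Hq & _).
  exists p1, q1, p2, q2, p3, q3; rewrite !reverses_nreverses; eauto 10.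
Qed.

Lemma r_complete_equiv_iff : positive_relations R -> r_complete R -> equiv_iff_reversing.
Proof.
  intros HR HC u v; split; [| apply reversing_equiv_sound].
  intro H; destruct (HC u v [] []) as (u'' & v'' & w & Hr & E1 & E2);
    [rewrite !app_nil_r; exact H |].
  apply (equiv_nil_l HR), app_eq_nil in E1 as [-> _].
  apply (equiv_nil_l HR), app_eq_nil in E2 as [-> _].
  exact Hr.
Qed.

(* Cut [v'^-1 u^-1 v u' ↷ ε] twice: the piece [u^-1 v ↷ v'' u''^-1] is the required
   reversing, and the remaining pieces exhibit the common right factor. *)
Lemma equiv_iff_r_complete : equiv_iff_reversing -> r_complete R.
Proof.
  intros HI u v u' v' Heq; apply (proj1 (HI _ _)) in Heq.
  assert (H : reverses R ((inv v' ++ inv u ++ pos v) ++ pos u') (pos [] ++ inv [])).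
  { unfold reversing_equiv in Heq; rewrite !inv_app, !pos_app in Heq.
    rewrite <- !app_assoc in *; exact Heq. }
  destruct (reverses_split _ _ _ _ H) as (p1 & q1 & p2 & q2 & p3 & q3 & H1 & H2 & H3 & Hp & Hq).
  symmetry in Hp, Hq; apply app_eq_nil in Hp as [-> ->]; apply app_eq_nil in Hq as [-> ->].
  destruct (reverses_split _ _ _ _ H1) as (a & b & x & y & c & d & G1 & G2 & G3 & Ha & ->).
  symmetry in Ha; apply app_eq_nil in Ha as [-> ->].
  rewrite <- (app_nil_r (inv v')) in G1.
  pose proof (reverses_sound [] u' [] p2 H2) as E2.
  pose proof (reverses_sound _ _ [] [] H3) as E3.
  pose proof (reverses_sound v' [] b [] G1) as F1.
  pose proof (reverses_sound b x d [] G3) as F3.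
  rewrite !app_nil_r in E2, F1, F3; rewrite !app_nil_r in E3; cbn [app] in E2, F1.
  exists y, x, d; split; [exact G2 | split].
  - exact (equiv_trans (equiv_sym E2) (equiv_sym E3)).
  - exact (equiv_trans F1 F3).
Qed.

Lemma equiv_iff_transitive : equiv_iff_reversing -> reversing_transitive.
Proof.
  intros HI u v w H1 H2; apply (proj1 (HI _ _)).
  exact (equiv_trans (reversing_equiv_sound H1) (reversing_equiv_sound H2)).
Qed.

Lemma transitive_equiv_iff :
  positive_relations R -> reversing_transitive -> equiv_iff_reversing.
Proof.
  intros HR HT u v; split; [intro H; apply H; [repeat split |] | apply reversing_equiv_sound].
  - exact reversing_equiv_refl.
  - exact @reversing_equiv_sym.
  - exact HT.
  - exact @reversing_equiv_ctx.
  - intros x y; exact (reversing_equiv_rel x y HR).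
Qed.

Lemma equiv_iff_strong_r_cube : equiv_iff_reversing -> forall u v w, strong_r_cube R u v w.
Proof. intros HI u v w u' v' H; apply HI, (reverses_cube_sound _ _ _ _ _ H). Qed.

Lemma r_complete_r_cube : r_complete R -> forall u v w, r_cube R u v w.
Proof. intros HC u v w u' v' H; apply HC, (reverses_cube_sound _ _ _ _ _ H). Qed.

Lemma reversing_equiv_cube {u v w} : reversing_equiv u v -> reversing_equiv v w ->
  reverses R (inv u ++ pos v ++ inv v ++ pos w) (pos [] ++ inv []).
Proof.
  intros H1 H2; pose proof (reverses_ctx (inv u ++ pos v) [] H2) as H.
  rewrite <- !app_assoc, !app_nil_r in H; exact (reverses_trans H H1).
Qed.

Lemma strong_r_cube_transitive : (forall u v w, strong_r_cube R u v w) -> reversing_transitive.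
Proof.
  intros HS u v w H1 H2; pose proof (HS u w v [] [] (reversing_equiv_cube H1 H2)) as H.
  rewrite !app_nil_r in H; exact H.
Qed.

Lemma r_cube_transitive : positive_relations R ->
  (forall u v w, r_cube R u v w) -> reversing_transitive.
Proof.
  intros HR HC u v w H1 H2.
  destruct (HC u w v [] [] (reversing_equiv_cube H1 H2)) as (u'' & v'' & w'' & Hr & E1 & E2).
  apply (equiv_nil_l HR), app_eq_nil in E1 as [-> _].
  apply (equiv_nil_l HR), app_eq_nil in E2 as [-> _].
  exact Hr.
Qed.

End Reversing.

Theorem proposition3p3 (S : Type) (R : list S -> list S -> Prop)
  (HS : inhabited S) (HR : positive_relations R) :
  (r_complete R <->
     (forall u v : list S, equiv R u v <-> reverses R (inv u ++ pos v) [])) /\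
  ((forall u v : list S, equiv R u v <-> reverses R (inv u ++ pos v) []) <->
     (forall u v w : list S,
        reverses R (inv u ++ pos v) [] -> reverses R (inv v ++ pos w) [] ->
        reverses R (inv u ++ pos w) [])) /\
  ((forall u v w : list S,
        reverses R (inv u ++ pos v) [] -> reverses R (inv v ++ pos w) [] ->
        reverses R (inv u ++ pos w) []) <->
     (forall u v w : list S, strong_r_cube R u v w)) /\
  ((forall u v w : list S, strong_r_cube R u v w) <->
     (forall u v w : list S, r_cube R u v w)).
Proof.
  pose proof (transitive_equiv_iff HR) as T_I.
  split; [split; [exact (r_complete_equiv_iff HR) | exact equiv_iff_r_complete] |].
  split; [split; [exact equiv_iff_transitive | exact T_I] |].
  split; [split; [intro HT; exact (equiv_iff_strong_r_cube (T_I HT)) |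
                   exact strong_r_cube_transitive] |].
  split; intro H.
  - exact (r_complete_r_cube (equiv_iff_r_complete (T_I (strong_r_cube_transitive H)))).
  - exact (equiv_iff_strong_r_cube (T_I (r_cube_transitive HR H))).
Qed.
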